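(* Let $T_C$ be a finite complete binary tree with vertices $v_1,\dots,v_M$, and let each vertex $v_i$ carry a parameter $l_i \in [0,1]$. Suppose $l_i = 1$ for every leaf $v_i$ of $T_C$. Then $\sum_{T \in \mathcal{T}(T_C)} p(T) = 1$, where $\mathcal{T}(T_C)$ is the set of all internal trees of $T_C$.
   Context: All trees are rooted, and children are designated left or right. A complete binary tree is a rooted tree in which every non-leaf vertex has exactly two children (a left and a right child). A full binary tree is a rooted tree in which every vertex has 0 or 2 children. An internal tree of $T_C$ is a full binary tree $T$ with $\mathrm{root}(T)=\mathrm{root}(T_C)$ whose vertices and edges are a subset of those of $T_C$ (left/right children as in $T_C$). For an internal tree $T$ with leaf set $L(T)$, its probability is $p(T) = \pi(\mathrm{root}(T))$, where $\pi$ is defined recursively on vertices of $T$ by $\pi(v_i) = l_i$ if $v_i \in L(T)$, and $\pi(v_i) = (1-l_i)\,\pi(\mathrm{left}(v_i))\,\pi(\mathrm{right}(v_i))$ otherwise, with $\mathrm{left}(v_i),\mathrm{right}(v_i)$ the left and right children of $v_i$ in $T$. *)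

From HB Require Import structures.
From mathcomp Require Import all_boot all_order all_algebra.
From Stdlib Require List.
Set Implicit Arguments. Unset Strict Implicit. Unset Printing Implicit Defensive.
Import Order.TTheory GRing.Theory Num.Theory.
Local Open Scope ring_scope.

Inductive ctree (R : Type) : Type :=
| CLeaf (l : R)
| CNode (l : R) (left right : ctree R).

Definition label (R : Type) (t : ctree R) : R :=
  match t with CLeaf l => l | CNode l _ _ => l end.

Fixpoint labels_in01 (R : numDomainType) (t : ctree R) : Prop :=
  match t with
  | CLeaf l => 0 <= l <= 1
  | CNode l a b => 0 <= l <= 1 /\ labels_in01 a /\ labels_in01 b
  end.

Fixpoint leaves_one (R : ringType) (t : ctree R) : Prop :=
  match t with
  | CLeaf l => l = 1
  | CNode _ a b => leaves_one a /\ leaves_one b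
  end.

Inductive ishape : Type :=
| SLeaf
| SNode (left right : ishape).

(* [internal tc s]: the full binary tree of ishape s, placed at root(tc) with
   left/right children as in tc, uses only vertices and edges of tc.
   Such placements are exactly the internal trees of tc. *)
Fixpoint internal (R : Type) (tc : ctree R) (s : ishape) : Prop :=
  match s, tc with
  | SLeaf, _ => True
  | SNode sa sb, CNode _ a b => internal a sa /\ internal b sb
  | SNode _ _, CLeaf _ => False
  end.

(* pi(root) for the internal tree of ishape s placed in tc:
   pi(v) = l_v at leaves of T, (1 - l_v) pi(left) pi(right) otherwise. *)
Fixpoint prob (R : ringType) (tc : ctree R) (s : ishape) : R :=
  match s, tc with
  | SLeaf, t => label t
  | SNode sa sb, CNode l a b => (1 - l) * prob a sa * prob b sb
  | SNode _ _, CLeaf _ => 0 (* not an internal tree; never used *)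
  end.

(* An internal tree of a node is either the node alone or the node joined to an
   internal tree of each child.  Writing [S t] for the sum of [prob] over the
   internal trees of [t], this gives [S (CNode l a b) = l + (1 - l) * S a * S b],
   so by induction [S t = l + (1 - l) * 1 * 1 = 1]; the base case is the
   hypothesis on the leaves. *)
From HB Require Import structures.
From mathcomp Require Import all_boot all_order all_algebra.
From Stdlib Require List.
Set Implicit Arguments. Unset Strict Implicit. Unset Printing Implicit Defensive.
Import Order.TTheory GRing.Theory Num.Theory.
Local Open Scope ring_scope.

Lemma inP (T : eqType) (x : T) (s : seq T) : reflect (List.In x s) (x \in s).
Proof.
elim: s => [|y s IHs] /=; first by constructor.
rewrite inE eq_sym; apply: (iffP orP) => -[/eqP|/IHs]; by [left|right].
Qed.

Lemma NoDup_uniq (T : eqType) (s : seq T) : List.NoDup s -> uniq s.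
Proof.
elim: s => // x s IHs /List.NoDup_cons_iff [x_notin_s nd_s] /=.
by rewrite IHs // andbT; apply/negP => /inP.
Qed.

Fixpoint ishape_eqb (x y : ishape) : bool :=
  match x, y with
  | SLeaf, SLeaf => true
  | SNode a b, SNode c d => ishape_eqb a c && ishape_eqb b d
  | _, _ => false
  end.

Lemma ishape_eqP : Equality.axiom ishape_eqb.
Proof.
elim=> [|a IHa b IHb] [|c d] /=; try by constructor.
case: (IHa c) => [->|neq_ac]; last by constructor; case.
case: (IHb d) => [->|neq_bd]; last by constructor; case.
by constructor.
Qed.

HB.instance Definition _ := hasDecEq.Build ishape ishape_eqP.

Fixpoint internals (R : Type) (tc : ctree R) : seq ishape :=
  match tc with
  | CLeaf _ => [:: SLeaf]
  | CNode _ a b => SLeaf :: [seq SNode x y | x <- internals a, y <- internals b]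
  end.

Lemma internals_uniq (R : Type) (tc : ctree R) : uniq (internals tc).
Proof.
elim: tc => [l|l a IHa b IHb] //=; apply/andP; split.
  by apply/allpairsP => -[[x y] [_ _]].
by apply: allpairs_uniq => // -[x1 y1] [x2 y2] _ _ [-> ->].
Qed.

Lemma mem_internals (R : Type) (tc : ctree R) (t : ishape) :
  (t \in internals tc) <-> internal tc t.
Proof.
elim: tc t => [l|l a IHa b IHb] [|x y] //=; rewrite inE /=; split.
- by case/allpairsP => -[x' y'] [/= /IHa ? /IHb ? [-> ->]].
- by case=> /IHa ? /IHb ?; apply/allpairsP; exists (x, y).
Qed.

Lemma sum_prob_internals (R : nzRingType) (tc : ctree R) :
  leaves_one tc -> \sum_(t <- internals tc) prob tc t = 1.
Proof.
elim: tc => [l ->|l a IHa b IHb [one_a one_b]] /=; first by rewrite big_seq1.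
rewrite big_cons big_allpairs_dep /=.
under eq_bigr => x _ do rewrite -mulr_sumr.
by rewrite -mulr_suml -big_distrr /= IHa // IHb // !mulr1 addrC subrK.
Qed.

Theorem mainTheorem2 (R : realFieldType) (TC : ctree R)
  (h01 : labels_in01 TC) (hleaf : leaves_one TC)
  (s : seq ishape) (hnd : List.NoDup s)
  (hs : forall t : ishape, List.In t s <-> internal TC t) :
  \sum_(t <- s) prob TC t = 1.
Proof.
rewrite -(sum_prob_internals hleaf); apply/perm_big/uniq_perm.
- exact: NoDup_uniq.
- exact: internals_uniq.
- by move=> t; apply/inP/idP => [/hs/mem_internals|/mem_internals/hs].
Qed.
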